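(* Let $k\in\mathbb{Z}_+$ and let $A$ be the matrix defined below. Then $A^{\lfloor k/2\rfloor+1}=0$. Consequently, if $M:[0,\infty)\to\mathbb{R}^{\binom{k+d}{d}}$ satisfies $\frac{dM}{dt}=AM$ on $(0,\infty)$ and $M(0)=\lim_{t\to0^+}M(t)$, then for every $t\ge0$, $$\|M(0)\|_\infty\le\|M(t)\|_\infty\sum_{j=0}^{\lfloor k/2\rfloor}\frac{k^j(k-1)^j}{j!}\,t^j.$$
   Context: $A$ is the square matrix indexed by $\{\alpha\in\mathbb{Z}_+^d:\|\alpha\|_1\le k\}$ (where $\|\alpha\|_1=\sum_i\alpha_i$) with entries $A_{\alpha,\alpha'}=\alpha_i(\alpha_i-1)$ if $\alpha'=\alpha-2e_i$ for some $i\in\{1,\dots,d\}$ ($e_i$ the canonical basis vector of $\mathbb{Z}^d$), and $A_{\alpha,\alpha'}=0$ otherwise. $\|\cdot\|_\infty$ is the max-norm of vectors. *)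

From HB Require Import structures.
From mathcomp Require Import all_boot all_order all_algebra.
From mathcomp Require Import all_classical all_reals all_analysis.
Set Implicit Arguments. Unset Strict Implicit. Unset Printing Implicit Defensive.
Import Order.TTheory GRing.Theory Num.Theory.
Local Open Scope ring_scope.

Definition mindex (d k : nat) : Type :=
  {a : {ffun 'I_d -> 'I_k.+1} | (\sum_(i < d) (a i : nat) <= k)%N}.

Definition mi {d k : nat} (a : mindex d k) (i : 'I_d) : nat := val a i.

(* Entry A_{alpha,alpha'} : alpha_i (alpha_i - 1) if alpha' = alpha - 2 e_i for
   some i, and 0 otherwise.  At most one i can satisfy the condition, so the
   sum below has at most one nonzero term. *)
Definition Aentry (R : pzRingType) {d k : nat} (a a' : mindex d k) : R :=
  \sum_(i < d)
    (if (mi a i == (mi a' i).+2) && [forall j, (j != i) ==> (mi a j == mi a' j)]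
     then ((mi a i * (mi a i).-1)%N)%:R else 0).

Definition Amat (R : pzRingType) (d k : nat) : 'M[R]_(#|{: mindex d k}|) :=
  \matrix_(i, j) Aentry R (enum_val i) (enum_val j).

Definition supnorm (R : realDomainType) (n : nat) (v : 'cV[R]_n) : R :=
  \big[Num.max/0]_(i < n) `|v i ord0|.

From HB Require Import structures.
From mathcomp Require Import all_boot all_order all_algebra.
From mathcomp Require Import all_classical all_reals all_analysis.
From mathcomp Require Import zify ring.
Import Order.TTheory GRing.Theory Num.Theory.
Import numFieldNormedType.Exports.
Local Open Scope classical_set_scope.
Local Open Scope ring_scope.

(* A lowers the total degree |α|_1 by exactly 2, so A^m can only connect
   degrees differing by 2m, and A^(⌊k/2⌋+1) = 0.  Row α of A has at most one
   nonzero entry per coordinate i (in column α - 2e_i), so its row sum is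
   Σ α_i(α_i - 1) ≤ k(k-1), and the row sums of A^j are at most (k(k-1))^j.
   For the ODE, G(s) = Σ_{j ≤ ⌊k/2⌋} (-s)^j/j! A^j M(s) is the finite series
   of e^{-sA} M(s); its derivative telescopes to a multiple of A^(⌊k/2⌋+1) M(s),
   so G is constant and M(0) = G(0) = G(t).  Bounding the terms of G(t) with
   the row sums gives the estimate. *)

Section GradedNilpotence.
Context {R : pzRingType} {n s : nat} {A : 'M[R]_n} {w : 'I_n -> nat}.
Hypothesis A_graded : forall i j, A i j != 0 -> w i = (w j + s)%N.

Lemma graded_mxpow m i j : (A ^+ m) i j != 0 -> w i = (w j + m * s)%N.
Proof.
elim: m i j => [|m IH] i j.
  by rewrite expr0 mxE; case: (eqVneq i j) => [->|_]; rewrite ?eqxx // mul0n addn0.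
move=> Am1_ij.
have /existsP[l /andP[Am_il A_lj]] : [exists l, ((A ^+ m) i l != 0) && (A l j != 0)].
  apply: contraNT Am1_ij => /existsPn none.
  rewrite exprSr -mulmxE mxE big1 // => l _.
  by have := none l; rewrite negb_and => /orP[]/negPn/eqP->; rewrite ?mul0r ?mulr0.
by rewrite (IH _ _ Am_il) (A_graded _ _ A_lj) mulSn; lia.
Qed.

Lemma graded_mx_nilpotent k :
  (0 < s)%N -> (forall i, w i <= k)%N -> A ^+ (k %/ s).+1 = 0.
Proof.
move=> s_gt0 w_le; apply/matrixP => i j; rewrite mxE.
have [//|/graded_mxpow wij] := eqVneq ((A ^+ (k %/ s).+1) i j) 0.
have := w_le i; have := ltn_ceil k s_gt0; lia.
Qed.

End GradedNilpotence.

Section RowSums.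
Context {R : realDomainType}.

Lemma rowsum_mulmx_le m n p (A : 'M[R]_(m, n)) (B : 'M[R]_(n, p)) a b :
  0 <= b -> (forall i, \sum_l `|A i l| <= a) -> (forall i, \sum_l `|B i l| <= b) ->
  forall i, \sum_l `|(A *m B) i l| <= a * b.
Proof.
move=> b_ge0 A_le B_le i.
apply: (@le_trans _ _ (\sum_l \sum_q `|A i q| * `|B q l|)).
  apply: ler_sum => l _; rewrite mxE; apply: (le_trans (ler_norm_sum _ _ _)).
  by apply: ler_sum => q _; rewrite normrM.
rewrite exchange_big /=.
apply: (@le_trans _ _ (\sum_q `|A i q| * b)).
  by apply: ler_sum => q _; rewrite -mulr_sumr; apply: ler_wpM2l.
by rewrite -mulr_suml; apply: ler_wpM2r.
Qed.

Lemma rowsum_mxpow_le {n} {A : 'M[R]_n} {c : R} :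
  0 <= c -> (forall i, \sum_l `|A i l| <= c) ->
  forall m i, \sum_l `|(A ^+ m) i l| <= c ^+ m.
Proof.
move=> c_ge0 A_le; elim=> [|m IH] i.
  rewrite expr0 (bigD1 i) //= big1 => [|l li]; last by rewrite mxE eq_sym (negbTE li) normr0.
  by rewrite mxE eqxx normr1 addr0.
by rewrite exprSr -mulmxE exprSr; apply: rowsum_mulmx_le.
Qed.

Lemma normr_le_supnorm n (v : 'cV[R]_n) i : `|v i ord0| <= supnorm v.
Proof. by rewrite /supnorm (bigD1 i) //= le_max lexx. Qed.

Lemma supnorm_ge0 n (v : 'cV[R]_n) : 0 <= supnorm v.
Proof.
by apply: (big_ind (fun x => 0 <= x)) => // x y x_ge0 _; rewrite le_max x_ge0.
Qed.

Lemma supnorm_le n (v : 'cV[R]_n) c :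
  0 <= c -> (forall i, `|v i ord0| <= c) -> supnorm v <= c.
Proof.
move=> c_ge0 v_le; apply: (big_ind (fun x => x <= c)) => // x y x_le y_le.
by rewrite ge_max x_le y_le.
Qed.

Lemma normr_mulmx_col_le m n (A : 'M[R]_(m, n)) (v : 'cV[R]_n) i :
  `|(A *m v) i ord0| <= (\sum_l `|A i l|) * supnorm v.
Proof.
rewrite mxE mulr_suml; apply: (le_trans (ler_norm_sum _ _ _)).
by apply: ler_sum => l _; rewrite normrM; apply: ler_wpM2l; rewrite ?normr_le_supnorm.
Qed.

End RowSums.

Section MultiIndexOperator.
Variables d k : nat.

Definition mdeg (a : mindex d k) : nat := \sum_(i < d) mi a i.

Lemma mdeg_le (a : mindex d k) : (mdeg a <= k)%N.
Proof. exact: valP a. Qed.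

Definition lower2 (a b : mindex d k) (i : 'I_d) : bool :=
  (mi a i == (mi b i).+2) && [forall j, (j != i) ==> (mi a j == mi b j)].

Lemma AentryE (R : pzRingType) (a b : mindex d k) :
  Aentry R a b =
  \sum_(i < d) if lower2 a b i then (mi a i * (mi a i).-1)%N%:R else 0.
Proof. by []. Qed.

Lemma lower2_mdeg a b i : lower2 a b i -> mdeg a = (mdeg b + 2)%N.
Proof.
move=> /andP[/eqP a_i /forallP a_j].
rewrite /mdeg (bigD1 i) //= [in RHS](bigD1 i) //= a_i.
rewrite (eq_bigr (mi b)); first lia.
by move=> j j_neq_i; apply/eqP; exact: implyP (a_j j) j_neq_i.
Qed.

Lemma lower2_inj {a b c : mindex d k} {i : 'I_d} : lower2 a b i -> lower2 a c i -> b = c.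
Proof.
move=> /andP[/eqP b_i /forallP b_j] /andP[/eqP c_i /forallP c_j].
apply: val_inj; apply/ffunP => j; apply: val_inj; change (mi b j = mi c j).
have [->|j_neq_i] := eqVneq j i; first by move: b_i; rewrite c_i => -[].
by have /eqP <- := implyP (b_j j) j_neq_i; have /eqP <- := implyP (c_j j) j_neq_i.
Qed.

Lemma Aentry_neq0 (R : pzRingType) (a b : mindex d k) :
  Aentry R a b != 0 -> mdeg a = (mdeg b + 2)%N.
Proof.
rewrite AentryE; apply: contraNeq => deg_neq; apply/eqP; apply: big1 => i _.
by case: ifP => // /lower2_mdeg deg_eq; rewrite deg_eq eqxx in deg_neq.
Qed.

Lemma Aentry_ge0 (R : numDomainType) (a b : mindex d k) : 0 <= Aentry R a b.
Proof. by rewrite AentryE; apply: sumr_ge0 => i _; case: ifP. Qed.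

Lemma sum_falling2_le (a : mindex d k) :
  (\sum_(i < d) mi a i * (mi a i).-1 <= k * k.-1)%N.
Proof.
apply: (@leq_trans (\sum_(i < d) mi a i * k.-1)).
  apply: leq_sum => i _; have : (mi a i < k.+1)%N := ltn_ord _.
  by rewrite leq_mul2l; lia.
by rewrite -big_distrl leq_mul2r mdeg_le orbT.
Qed.

Lemma sum_Aentry_le (R : numDomainType) (a : mindex d k) :
  \sum_b Aentry R a b <= (k * k.-1)%N%:R.
Proof.
under eq_bigr do rewrite AentryE; rewrite exchange_big /=.
apply: le_trans (_ : \sum_(i < d) (mi a i * (mi a i).-1)%N%:R <= _); last first.
  by rewrite -natr_sum ler_nat sum_falling2_le.
apply: ler_sum => i _.
have [b ab_i|no_b] := pickP (lower2 a ^~ i); last by rewrite big1 // => b _; rewrite no_b.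
rewrite (bigD1 b) //= ab_i big1 ?addr0 // => c c_neq_b.
by case: ifP => // /(lower2_inj ab_i) b_eq_c; rewrite b_eq_c eqxx in c_neq_b.
Qed.

Lemma Amat_nilpotent (R : pzRingType) : Amat R d k ^+ (k./2).+1 = 0.
Proof.
have Amat_graded i j : Amat R d k i j != 0 ->
    mdeg (enum_val i) = (mdeg (enum_val j) + 2)%N.
  by rewrite mxE => /Aentry_neq0.
by rewrite -divn2; apply: (graded_mx_nilpotent Amat_graded) => // i; exact: mdeg_le.
Qed.

Lemma rowsum_Amat_le (R : realDomainType) i :
  \sum_l `|Amat R d k i l| <= (k * k.-1)%N%:R.
Proof.
under eq_bigr do rewrite mxE ger0_norm ?Aentry_ge0 //.
by rewrite -(big_enum_val (Aentry R (enum_val i))) sum_Aentry_le.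
Qed.

End MultiIndexOperator.

Section TaylorCoefficients.
Context {R : realType}.

Lemma is_derive1_cvg {f : R -> R} {x df : R} : is_derive x 1 f df -> f @ x --> f x.
Proof.
move=> f_df; have /derivable1_diffP/differentiable_continuous// : derivable f x 1.
exact: ex_derive.
Qed.

Definition expN_coef (j : nat) (s : R) : R := (- s) ^+ j / j`!%:R.

Lemma is_derive_expN_coef (j : nat) (s : R) :
  is_derive s 1 (expN_coef j) (if j is j'.+1 then - expN_coef j' s else 0).
Proof.
case: j => [|j].
  have -> : expN_coef 0 = cst 1 by apply/funext => u; rewrite /expN_coef expr0 divr1.
  exact: is_derive_cst.
have -> : expN_coef j.+1 = (-%R) ^+ j.+1 * cst (j.+1`!%:R^-1).
  by apply/funext => u; rewrite /expN_coef !fctE.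
have := is_deriveM (is_deriveX j.+1 (is_deriveNid s 1))
  (is_derive_cst (j.+1`!%:R^-1 : R) s 1).
move/is_derive_eq; apply.
rewrite /expN_coef /= factS natrM invfM /GRing.scale /=.
by field; rewrite pnatr_eq0 -lt0n fact_gt0 addrC natr1 pnatr_eq0.
Qed.

Lemma expN_coef_cvg j (x : R) : expN_coef j @ x --> expN_coef j x.
Proof. exact: is_derive1_cvg (is_derive_expN_coef j x). Qed.

Lemma normr_expN_coef j (t : R) : 0 <= t -> `|expN_coef j t| = t ^+ j / j`!%:R.
Proof.
by move=> t_ge0; rewrite /expN_coef normrM normrX normrN normfV normr_nat ger0_norm.
Qed.

End TaylorCoefficients.

Section NilpotentLinearODE.
Context {R : realType} {n K : nat} {A : 'M[R]_n} {M : R -> 'cV[R]_n}.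
Hypothesis A_nilpotent : A ^+ K.+1 = 0.
Hypothesis M_deriv : forall t : R, 0 < t -> forall i,
  is_derive t 1 (fun s => M s i ord0) ((A *m M t) i ord0).
Hypothesis M_cvg0 : forall i, (fun s => M s i ord0) @ at_right 0 --> M 0 i ord0.

Let mxpowM j i s := (A ^+ j *m M s) i ord0.

Let backward_sum i s := \sum_(j < K.+1) expN_coef j s * mxpowM j i s.

Lemma is_derive_mxpowM j (i : 'I_n) (s : R) :
  0 < s -> is_derive s 1 (mxpowM j i) (mxpowM j.+1 i s).
Proof.
move=> s_gt0.
have -> : mxpowM j i = \sum_l (A ^+ j) i l *: (fun s => M s l ord0).
  by apply/funext => u; rewrite /mxpowM mxE fct_sumE; apply: eq_bigr.
have := is_derive_sum (fun l => is_deriveZ ((A ^+ j) i l) (M_deriv _ s_gt0 l)).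
move/is_derive_eq; apply.
by rewrite /mxpowM exprSr -mulmxA mxE.
Qed.

Lemma is_derive_backward_sum (i : 'I_n) (s : R) :
  0 < s -> is_derive s 1 (backward_sum i) 0.
Proof.
move=> s_gt0.
have -> : backward_sum i = \sum_(j < K.+1) (expN_coef j * mxpowM j i).
  by apply/funext => u; rewrite /backward_sum fct_sumE.
have := is_derive_sum (fun j : 'I_K.+1 =>
  is_deriveM (is_derive_expN_coef j s) (is_derive_mxpowM j i s s_gt0)).
move/is_derive_eq; apply.
pose u j := if j is j'.+1 then expN_coef j' s * mxpowM j'.+1 i s else 0.
transitivity (\sum_(0 <= j < K.+1) (u j.+1 - u j)).
  rewrite big_mkord; apply: eq_bigr => -[[|j] j_lt] _; rewrite /u /GRing.scale /=.
    by rewrite mulr0 addr0 subr0.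
  by ring.
by rewrite telescope_sumr // /u /mxpowM A_nilpotent mul0mx mxE mulr0 subr0.
Qed.

Lemma backward_sum_cvg0 i : backward_sum i @ at_right 0 --> backward_sum i 0.
Proof.
apply: cvg_big => [|j _]; first exact: add_continuous.
apply: cvgM; first exact: cvg_at_right_filter (expN_coef_cvg j 0).
rewrite /mxpowM mxE; under eq_cvg do rewrite mxE.
apply: cvg_big => [|l _]; first exact: add_continuous.
exact: cvgM (cvg_cst _) (M_cvg0 l).
Qed.

Lemma backward_sum0 i : backward_sum i 0 = M 0 i ord0.
Proof.
rewrite /backward_sum big_ord_recl big1 => [|j _].
  by rewrite /expN_coef expr0 divr1 mul1r /mxpowM expr0 mul1mx addr0.
by rewrite /expN_coef oppr0 expr0n mul0r mul0r.
Qed.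

Lemma backward_sum_const i t : 0 <= t -> backward_sum i t = backward_sum i 0.
Proof.
rewrite le_eqVlt => /predU1P[<-//|t_gt0].
have sum_deriv x : x \in `]0, t[ -> is_derive x 1 (backward_sum i) ((fun=> 0) x).
  by rewrite in_itv => /andP[x_gt0 _]; exact: is_derive_backward_sum.
have sum_cont : {within `[0, t], continuous (backward_sum i)}.
  apply: derivable_oo_LRcontinuous_within; split.
  - by move=> x /sum_deriv x_deriv; exact: ex_derive.
  - exact: backward_sum_cvg0.
  - exact: cvg_at_left_filter (is_derive1_cvg (is_derive_backward_sum i t t_gt0)).
have [c _] := MVT t_gt0 sum_deriv sum_cont.
by rewrite mul0r => /eqP; rewrite subr_eq0 => /eqP.
Qed.

Lemma nilpotent_ode_initial_value (t : R) (i : 'I_n) : 0 <= t ->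
  M 0 i ord0 = \sum_(j < K.+1) expN_coef j t * (A ^+ j *m M t) i ord0.
Proof. by move=> t_ge0; rewrite -backward_sum0 -(backward_sum_const i t t_ge0). Qed.

End NilpotentLinearODE.

Theorem mainTheorem4 (R : realType) (d k : nat) :
  Amat R d k ^+ (k./2).+1 = 0 /\
  (forall M : R -> 'cV[R]_(#|{: mindex d k}|),
     (forall t : R, 0 < t -> forall i,
        is_derive t 1 (fun s => M s i ord0) ((Amat R d k *m M t) i ord0)) ->
     (forall i, (fun s => M s i ord0) @ at_right 0 --> M 0 i ord0) ->
     forall t : R, 0 <= t ->
       supnorm (M 0) <=
       supnorm (M t) * \sum_(j < (k./2).+1)
           ((k ^ j * k.-1 ^ j)%N%:R / (j`!)%:R * t ^+ j)).
Proof.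
split; first exact: Amat_nilpotent.
move=> M M_deriv M_cvg0 t t_ge0.
have c_ge0 : 0 <= (k * k.-1)%N%:R :> R by [].
apply: supnorm_le => [|i].
  by rewrite mulr_ge0 ?supnorm_ge0 ?sumr_ge0 // => j _; rewrite mulr_ge0 ?exprn_ge0.
rewrite (nilpotent_ode_initial_value (Amat_nilpotent d k R) M_deriv M_cvg0 t i t_ge0).
rewrite mulr_sumr; apply: le_trans (ler_norm_sum _ _ _) (ler_sum _ _) => j _.
rewrite normrM normr_expN_coef //.
have rowsum_le := rowsum_mxpow_le c_ge0 (rowsum_Amat_le d k R) j i.
apply: (@le_trans _ _ (t ^+ j / j`!%:R * ((k * k.-1)%N%:R ^+ j * supnorm (M t)))).
  apply: ler_wpM2l; first by rewrite divr_ge0 ?exprn_ge0.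
  apply: le_trans (normr_mulmx_col_le _ _ _ _ _) _.
  by apply: ler_wpM2r; [exact: supnorm_ge0 | exact: rowsum_le].
by rewrite -expnMn natrX le_eqVlt; apply/orP; left; apply/eqP; ring.
Qed.
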